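(* 1. If an infinite binary word $w$ is uniformly recurrent and of bounded width, then $w$ is bounded weak abelian periodic. 2. There exists an infinite binary uniformly recurrent word which is weak abelian periodic but not of bounded width.
   Context: For a finite word $u$, $|u|_a$ is the number of occurrences of the letter $a$ in $u$, and $\rho_a(u)=|u|_a/|u|$ for nonempty $u$. An infinite word $w$ over a finite alphabet $\Sigma$ is weak abelian periodic (WAP) if $w=v_0v_1v_2\cdots$ with $v_0$ finite and $v_1,v_2,\dots$ nonempty finite words such that $\rho_a(v_i)=\rho_a(v_j)$ for all $a\in\Sigma$ and all $i,j\ge1$; it is bounded WAP if such a factorization exists with $|v_i|\le C$ for all $i$, for some constant $C$. An infinite word is uniformly recurrent if every factor occurs infinitely often and with bounded gaps between consecutive occurrences. The graphic $g_w$ of a binary word $w=w_1w_2\cdots$ is the piecewise linear function with $g_w(n)=|w_1\cdots w_n|_1-|w_1\cdots w_n|_0$ for integers $n\ge0$ and linear in between (steps $(1,-1)$ for $0$ and $(1,1)$ for $1$). A binary infinite word $w$ is of bounded width if there exist rationals $a,b_1,b_2$ with $ax+b_1\le g_w(x)\le ax+b_2$ for all $x\ge0$. *)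

From HB Require Import structures.
From mathcomp Require Import all_boot all_order all_algebra.
From mathcomp Require Import reals.
Set Implicit Arguments. Unset Strict Implicit. Unset Printing Implicit Defensive.
Import Order.TTheory GRing.Theory Num.Theory.
Local Open Scope ring_scope.

(* An infinite binary word w = w_1 w_2 w_3 ... is encoded as w : nat -> bool,
   w i being the letter w_{i+1}; false = letter 0, true = letter 1. *)
Definition word := nat -> bool.

Definition occ (w : word) (a : bool) (i n : nat) : nat :=
  count (fun k => w k == a) (iota i n).

Definition rho (w : word) (a : bool) (i j : nat) : rat :=
  (occ w a i (j - i))%:R / (j - i)%:R.

(* A factorization w = v_0 v_1 v_2 ... is given by the cut points p :
   v_0 = w[0, p 0) (possibly empty), v_{k+1} = w[p k, p (k+1)).
   The v_k, k >= 1, are nonempty iff p is strictly increasing. *)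
Definition WAP_fact (w : word) (p : nat -> nat) : Prop :=
  (forall k, (p k < p k.+1)%N) /\
  (forall (a : bool) (k l : nat),
      rho w a (p k) (p k.+1) = rho w a (p l) (p l.+1)).

Definition WAP (w : word) : Prop := exists p, WAP_fact w p.

Definition bounded_WAP (w : word) : Prop :=
  exists p, WAP_fact w p /\ exists C : nat, forall k, (p k.+1 - p k <= C)%N.

Definition occurs_at (w : word) (i n j : nat) : Prop :=
  forall k, (k < n)%N -> w (j + k) = w (i + k).

Definition uniformly_recurrent (w : word) : Prop :=
  forall i n : nat,
    (forall m, exists j, (m <= j)%N /\ occurs_at w i n j) /\
    (exists G : nat, forall j, occurs_at w i n j ->
        exists j', (j < j' <= j + G)%N /\ occurs_at w i n j').

Definition graphic_nat (w : word) (n : nat) : int :=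
  (occ w true 0 n)%:Z - (occ w false 0 n)%:Z.

(* the graphic g_w, piecewise linear, on x >= 0 (step (1,1) for letter 1,
   (1,-1) for letter 0) *)
Definition graphic (R : realType) (w : word) (x : R) : R :=
  let n := `|Num.floor x|%N in
  (graphic_nat w n)%:~R + (x - n%:R) * (if w n then 1 else -1).

Definition bounded_width (R : realType) (w : word) : Prop :=
  exists a b1 b2 : rat, forall x : R, 0 <= x ->
    ratr a * x + ratr b1 <= graphic w x /\ graphic w x <= ratr a * x + ratr b2.

(** If the graphic of [w] stays within bounded distance of the line of
    rational slope [p/q], the integer "discrepancy" [D n = q g_w(n) - p n] takes
    finitely many values, so some factor [u] of [w] raises [D] from its minimum
    to its maximum (or lowers it from the maximum to the minimum).  The
    increment of [D] across a factor only depends on the factor, so at every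
    occurrence of [u] the discrepancy equals its extremal value; by uniform
    recurrence these occurrences have bounded gaps, and cutting [w] at them
    yields blocks on which [D] returns to the same value, i.e. of frequency
    [(q + p) / 2q] of ones.

    For the converse, the period-doubling word [d_n = v_2(n) mod 2] is a
    Toeplitz word, hence uniformly recurrent; its prefixes of length [3 * 4^m]
    contain exactly [4^m] ones, so its blocks [[3 * 4^k, 3 * 4^(k+1))] all have
    frequency [1/3], whereas the prefixes of length [(4^m - 1)/3] fall [2m/3]
    below the line of slope [-1/3]. *)
From HB Require Import structures.
From mathcomp Require Import all_boot all_order all_algebra.
From mathcomp Require Import reals zify ring lra.
From Stdlib Require Import Classical ClassicalEpsilon.
Set Implicit Arguments. Unset Strict Implicit. Unset Printing Implicit Defensive.
Import Order.TTheory GRing.Theory Num.Theory.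
Local Open Scope ring_scope.

Lemma occD (w : word) a i n m :
  occ w a i (n + m) = (occ w a i n + occ w a (i + n) m)%N.
Proof. by rewrite /occ iotaD count_cat. Qed.

Lemma occS (w : word) a i n : occ w a i n.+1 = (occ w a i n + (w (i + n) == a))%N.
Proof. by rewrite -addn1 occD /occ /= addn0. Qed.

Lemma occ_true_false (w : word) i n : (occ w true i n + occ w false i n)%N = n.
Proof.
rewrite /occ -[in RHS](size_iota i n) -(count_predC (fun k => w k == true)).
by congr (_ + _)%N; apply: eq_count => k /=; case: (w k).
Qed.

Lemma occ_occurs_at (w : word) a i n j :
  occurs_at w i n j -> occ w a j n = occ w a i n.
Proof.
move=> wij; rewrite /occ -(addn0 j) -(addn0 i) !iotaDl !count_map.
apply: eq_in_count => k; rewrite mem_iota add0n => /andP [_ kn] /=.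
by rewrite wij.
Qed.

Lemma graphic_natr (R : realType) (w : word) (n : nat) :
  graphic w (n%:R : R) = (graphic_nat w n)%:~R.
Proof.
rewrite /graphic (intrKfloor (R := R) n%:Z) /=.
by rewrite subrr mul0r addr0.
Qed.

Lemma bounded_width_nat (R : realType) (w : word) : bounded_width R w ->
  exists a b1 b2 : rat, forall n : nat,
    a * n%:R + b1 <= (graphic_nat w n)%:~R <= a * n%:R + b2.
Proof.
move=> [a [b1 [b2 bw]]]; exists a, b1, b2 => n.
have [lo hi] := bw n%:R (ler0n _ _); rewrite graphic_natr in lo hi.
have ratr_line b : ratr (a * n%:R + b) = ratr a * n%:R + ratr b :> R.
  by rewrite rmorphD rmorphM /= ratr_nat.
by rewrite -!(ler_rat R) !ratr_line ratr_int lo hi.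
Qed.

Lemma bounded_nat_fun_max (f : nat -> nat) (b : nat) :
  (forall n, (f n <= b)%N) -> exists n0, forall n, (f n <= f n0)%N.
Proof.
elim: b => [|b IHb] fb.
  by exists 0%N => n; have := fb n; have := fb 0%N; lia.
have [[n0 fn0]|no_b1] := classic (exists n, f n = b.+1).
  by exists n0 => n; rewrite fn0.
apply: IHb => n; have := fb n; case: (f n =P b.+1) => [fn|]; last lia.
by case: no_b1; exists n.
Qed.

Lemma bounded_int_fun_max (f : nat -> int) (lo hi : int) :
  (forall n, lo <= f n <= hi) -> exists n0, forall n, f n <= f n0.
Proof.
move=> fb; have [|n0 max_n0] := @bounded_nat_fun_max (fun n => `|f n - lo|%N) `|hi - lo|%N.
  by move=> n; have := fb n; lia.
by exists n0 => n; have := max_n0 n; have := fb n; have := fb n0; lia.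
Qed.

Lemma bounded_int_fun_extremal_increment (f : nat -> int) (lo hi : int) :
  (forall n, lo <= f n <= hi) ->
  exists i L, forall m n, `|f m - f n| <= `|f (i + L)%N - f i|.
Proof.
move=> fb; have [nmax max_f] := bounded_int_fun_max fb.
have [|nmin min_f] := @bounded_int_fun_max (fun n => - f n) (- hi) (- lo).
  by move=> n; have := fb n; lia.
exists (minn nmin nmax), (maxn nmin nmax - minn nmin nmax)%N => m n.
have -> : (minn nmin nmax + (maxn nmin nmax - minn nmin nmax) = maxn nmin nmax)%N by lia.
have := max_f m; have := max_f n; have := min_f m; have := min_f n.
case: (leqP nmin nmax) => _; lia.
Qed.

Lemma eq_at_extremal_increment (f : nat -> int) i j L :
  (forall m n, `|f m - f n| <= `|f (i + L)%N - f i|) ->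
  f (j + L)%N - f j = f (i + L)%N - f i -> f j = f i.
Proof.
move=> ext eqL.
have := ext (j + L)%N i; have := ext (i + L)%N j; have := ext i (j + L)%N.
have := ext j (i + L)%N; lia.
Qed.

Lemma uniformly_recurrent_occurrences (w : word) i L : uniformly_recurrent w ->
  exists (p : nat -> nat) (G : nat),
    (forall k, p k < p k.+1 <= p k + G)%N /\ forall k, occurs_at w i L (p k).
Proof.
move=> ur; have [occ_inf [G next_occ]] := ur i L.
have [j0 [_ occ_j0]] := occ_inf 0%N.
have next j : {j' | occurs_at w i L j ->
                   (j < j' <= j + G)%N /\ occurs_at w i L j'}.
  apply: constructive_indefinite_description.
  have [occ_j|] := classic (occurs_at w i L j); last by exists 0%N.
  by have [j' ?] := next_occ j occ_j; exists j'.
pose p k := iter k (fun j => sval (next j)) j0.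
have occ_p k : occurs_at w i L (p k).
  by elim: k => [//|k IHk]; exact: (proj2 (svalP (next (p k)) IHk)).
by exists p, G; split=> // k; exact: (proj1 (svalP (next (p k)) (occ_p k))).
Qed.

Lemma graphic_natE (w : word) n :
  graphic_nat w n = 2 * (occ w true 0 n)%:Z - n%:Z.
Proof. by rewrite /graphic_nat -[in n%:Z](occ_true_false w 0 n); lia. Qed.

(* [q g_w(n) - p n]: the scaled, integral deviation of the graphic from the line
   of slope [p / q]. *)
Definition discrepancy (w : word) (q p : int) (n : nat) : int :=
  q * graphic_nat w n - p * n%:Z.

Lemma discrepancyD (w : word) q p s l :
  discrepancy w q p (s + l) - discrepancy w q p s =
  q * ((occ w true s l)%:Z - (occ w false s l)%:Z) - p * l%:Z.
Proof. by rewrite /discrepancy /graphic_nat !occD !add0n !PoszD; ring. Qed.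

Lemma discrepancy_occurs_at (w : word) q p i l j : occurs_at w i l j ->
  discrepancy w q p (j + l) - discrepancy w q p j =
  discrepancy w q p (i + l) - discrepancy w q p i.
Proof. by move=> wij; rewrite !discrepancyD !(occ_occurs_at _ wij). Qed.

Lemma rho_discrepancy_eq (w : word) (q p : int) a s t : (s < t)%N -> q != 0 ->
  discrepancy w q p t = discrepancy w q p s ->
  rho w a s t = (if a then q%:~R + p%:~R else q%:~R - p%:~R) / (2 * q%:~R).
Proof.
move=> st q0; rewrite -(subnKC (ltnW st)); set l := (t - s)%N.
move=> /eqP; rewrite -subr_eq0 discrepancyD subr_eq0 => /eqP balanced.
have l0 : l%:R != 0 :> rat by rewrite pnatr_eq0 -lt0n subn_gt0.
have q0' : 2 * q%:~R != 0 :> rat by rewrite mulf_neq0 // intr_eq0.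
have /(congr1 (fun z : int => z%:~R : rat)) := balanced.
rewrite /= !intrM intrB /= => balanced'.
have := occ_true_false w s l => /(congr1 (fun n : nat => n%:R : rat)).
rewrite natrD /rho addKn; move: balanced'.
set T := (occ w true s l)%:R; set F := (occ w false s l)%:R => balanced' sumTF.
by case: a; apply/eqP; rewrite eqr_div //; apply/eqP; rewrite -/T -/F; nra.
Qed.

Lemma bounded_width_discrepancy (R : realType) (w : word) : bounded_width R w ->
  exists q p lo hi : int, 0 < q /\ forall n, lo <= discrepancy w q p n <= hi.
Proof.
move=> /bounded_width_nat [a [b1 [b2 bw]]].
have q0 : 0 < (denq a)%:~R :> rat by rewrite ltr0z denq_gt0.
exists (denq a), (numq a), (Num.floor ((denq a)%:~R * b1)),
  (Num.ceil ((denq a)%:~R * b2)); split=> [|n]; first exact: denq_gt0.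
have Dn : (discrepancy w (denq a) (numq a) n)%:~R
          = (denq a)%:~R * ((graphic_nat w n)%:~R - a * n%:R) :> rat.
  by rewrite /discrepancy intrB !intrM numqE; ring.
have /andP [lo hi] := bw n; apply/andP; split; rewrite -(ler_int rat).
  by apply: le_trans (floor_le _) _; rewrite Dn ler_pM2l //; lra.
by apply: le_trans (ceil_ge _); rewrite Dn ler_pM2l //; lra.
Qed.

Lemma uniformly_recurrent_bounded_width_bounded_WAP (R : realType) (w : word) :
  uniformly_recurrent w -> bounded_width R w -> bounded_WAP w.
Proof.
move=> ur /bounded_width_discrepancy [q [p [lo [hi [q0 Db]]]]].
set D := discrepancy w q p.
have [i [L extremal]] := bounded_int_fun_extremal_increment Db.
have [c [G [c_incr occ_c]]] := uniformly_recurrent_occurrences i L ur.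
have D_c k : D (c k) = D i.
  by apply: eq_at_extremal_increment extremal _; exact: discrepancy_occurs_at (occ_c k).
exists c; split; last by exists G => k; have := c_incr k; lia.
have c_lt k : (c k < c k.+1)%N by have /andP [] := c_incr k.
have q_neq0 : q != 0 by rewrite gt_eqF.
have D_step k : D (c k.+1) = D (c k) by rewrite !D_c.
split=> // a k l.
by rewrite !(rho_discrepancy_eq a (c_lt _) q_neq0 (D_step _)).
Qed.

Section PeriodDoubling.
Local Open Scope nat_scope.

(* [pd k = v_2(k) mod 2] for [k >= 1]; the word is indexed from [k = 1]. *)
Definition pd (k : nat) : bool := odd (logn 2 k).
Definition pd_word : word := fun n => pd n.+1.

Local Notation ones n := (occ pd_word true 0 n).

Lemma pd_odd k : pd k.*2.+1 = false.
Proof. by rewrite /pd lognE dvdn2 /= odd_double; case: prime. Qed.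

Lemma pd_double k : 0 < k -> pd k.*2 = ~~ pd k.
Proof.
move=> k0; rewrite /pd lognE /= dvdn2 odd_double double_gt0 k0 /=.
by rewrite -muln2 mulnK.
Qed.

Lemma pd_periodic K k m : 0 < k < 2 ^ K -> pd (k + m * 2 ^ K) = pd k.
Proof.
elim: K k => [|K IHK] k /andP [k0 kK]; first by rewrite expn0 in kK; lia.
rewrite -[k]odd_double_half expnS in k0 kK *.
case: (odd k) k0 kK => /= k0 kK.
  by rewrite -addnA -mulnCA mul2n -doubleD !pd_odd.
rewrite add0n -mulnCA mul2n -doubleD !pd_double ?IHK //; lia.
Qed.

Lemma pd_word_occurs_at i n m : occurs_at pd_word i n (i + m * 2 ^ (i + n)).
Proof.
move=> k kn; rewrite /pd_word.
have -> : (i + m * 2 ^ (i + n) + k).+1 = (i + k).+1 + m * 2 ^ (i + n) by lia.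
by rewrite pd_periodic // ltn0Sn /= (leq_trans _ (ltn_expl _ (ltnSn 1))) //; lia.
Qed.

Lemma pd_word_uniformly_recurrent : uniformly_recurrent pd_word.
Proof.
move=> i n; set P := 2 ^ (i + n).
have P0 : 0 < P by rewrite expn_gt0.
split=> [m|].
  exists (i + m * P); split; last exact: pd_word_occurs_at.
  have : m <= m * P by rewrite leq_pmulr.
  lia.
exists (i + P) => j _; exists (i + (j %/ P).+1 * P); split; last exact: pd_word_occurs_at.
have := ltn_ceil j P0; have := leq_divM j P; rewrite mulSn; lia.
Qed.

Lemma ones_succ n : ones n.+1 = ones n + pd n.+1.
Proof. by rewrite occS add0n /pd_word; case: (pd n.+1). Qed.

Lemma ones_double n : ones n.*2 + ones n = n.
Proof.
elim: n => [//|n IHn].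
rewrite doubleS !ones_succ pd_odd -doubleS pd_double //.
by case: (pd n.+1) => /=; lia.
Qed.

Lemma ones_double_succ n : ones n.*2.+1 = ones n.*2.
Proof. by rewrite ones_succ pd_odd addn0. Qed.

Lemma ones_mul4 n : ones (4 * n) = n + ones n.
Proof.
have -> : 4 * n = n.*2.*2 by lia.
by have := ones_double n; have := ones_double n.*2; lia.
Qed.

Lemma ones_3_mul_4_exp m : ones (3 * 4 ^ m) = 4 ^ m.
Proof.
elim: m => [|m IHm]; first by vm_compute.
by rewrite expnS mulnCA ones_mul4 IHm; lia.
Qed.

(* [repunit4 m = (4^m - 1) / 3], written [11...1] in base 4. *)
Fixpoint repunit4 m := if m is m'.+1 then 4 * repunit4 m' + 1 else 0.

Lemma ones_repunit4 m : 3 * ones (repunit4 m) + m = repunit4 m.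
Proof.
elim: m => [//|m IHm] /=.
have -> : 4 * repunit4 m + 1 = (repunit4 m).*2.*2.+1 by lia.
rewrite ones_double_succ (_ : _.*2.*2 = 4 * repunit4 m) ?ones_mul4; lia.
Qed.

End PeriodDoubling.

Lemma discrepancy_pd_3_mul_4_exp (q p : int) m :
  discrepancy pd_word q p (3 * 4 ^ m) = - (q + 3 * p) * (4 ^ m)%:Z.
Proof. by rewrite /discrepancy graphic_natE ones_3_mul_4_exp; lia. Qed.

Lemma discrepancy_pd_repunit4 (q p : int) m :
  3 * discrepancy pd_word q p (repunit4 m)
  = - (q + 3 * p) * (repunit4 m)%:Z - 2 * q * m%:Z.
Proof.
rewrite /discrepancy graphic_natE.
have := ones_repunit4 m; set N := repunit4 m; set O := occ _ _ _ _ => ones_N.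
have -> : N%:Z = 3 * O%:Z + m%:Z by lia.
by ring.
Qed.

Lemma pd_word_WAP : WAP pd_word.
Proof.
have lt_k k : (3 * 4 ^ k < 3 * 4 ^ k.+1)%N by rewrite ltn_pmul2l // ltn_exp2l.
have D_step k : discrepancy pd_word 3 (-1) (3 * 4 ^ k.+1)
                = discrepancy pd_word 3 (-1) (3 * 4 ^ k).
  by rewrite !discrepancy_pd_3_mul_4_exp.
exists (fun k => 3 * 4 ^ k)%N; split=> [|a k l]; first exact: lt_k.
by rewrite !(rho_discrepancy_eq a (lt_k _) _ (D_step _)).
Qed.

(* Along [3 * 4^m] a bounded discrepancy forces the slope [-1/3]; along
   [repunit4 m] the discrepancy then drifts linearly in [m]. *)
Lemma pd_word_not_bounded_width (R : realType) : ~ bounded_width R pd_word.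
Proof.
move=> /bounded_width_discrepancy [q [p [lo [hi [q0 Db]]]]].
set m := (2 * (`|lo| + `|hi|)).+1.
have m_lt : (m < 4 ^ m)%N by rewrite ltn_expl.
have slope : q + 3 * p = 0.
  have := Db (3 * 4 ^ m)%N; rewrite discrepancy_pd_3_mul_4_exp.
  by case: (ltgtP (q + 3 * p) 0) => // qp; nia.
have := Db (repunit4 m); have := discrepancy_pd_repunit4 q p m.
by rewrite slope; nia.
Qed.

Theorem proposition2 (R : realType) :
  (forall w : word, uniformly_recurrent w -> bounded_width R w -> bounded_WAP w) /\
  (exists w : word, uniformly_recurrent w /\ WAP w /\ ~ bounded_width R w).
Proof.
split; first exact: uniformly_recurrent_bounded_width_bounded_WAP.
exists pd_word; split; first exact: pd_word_uniformly_recurrent.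
by split; [exact: pd_word_WAP | exact: pd_word_not_bounded_width].
Qed.
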